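(* Let $\alpha,\beta,\gamma$ be real (e.g. $>-1$) and $\delta\neq\pm1$. For all $0\le k\le n$, $L_2\mathcal J_{n,k}=\nu_k\mathcal J_{n,k}$, where $\nu_k=2k$ if $k$ is even, $\nu_k=-2(k+\beta+\gamma+1)$ if $k$ is odd, and $$L_2=\frac{2(y-x)(x+\delta)}{x}R_x\partial_x+\frac{(\gamma+\beta+1)x^2+(\delta\gamma-\beta y)x+\delta y}{x^2}\,(R_x-\mathbb I).$$
   Context: $R_x f(x,y)=f(-x,y)$, $\mathbb I$ is the identity; products of operators are compositions (rightmost acts first), coefficients act by multiplication; the identity is between rational functions of $(x,y)$. For real $a,b$ and $c^2\neq1$, the Big $-1$ Jacobi polynomials are $$J_{n}(x;a,b,c)=\begin{cases}{}_2F_1\!\left(\begin{smallmatrix}-\frac n2,\ \frac{n+a+b+2}{2}\\ \frac{a+1}{2}\end{smallmatrix};\frac{1-x^2}{1-c^2}\right)+\frac{n(1-x)}{(1+c)(a+1)}\,{}_2F_1\!\left(\begin{smallmatrix}1-\frac n2,\ \frac{n+a+b+2}{2}\\ \frac{a+3}{2}\end{smallmatrix};\frac{1-x^2}{1-c^2}\right), & n\text{ even},\\[2mm] {}_2F_1\!\left(\begin{smallmatrix}-\frac{n-1}2,\ \frac{n+a+b+1}{2}\\ \frac{a+1}{2}\end{smallmatrix};\frac{1-x^2}{1-c^2}\right)-\frac{(n+a+b+1)(1-x)}{(1+c)(a+1)}\,{}_2F_1\!\left(\begin{smallmatrix}-\frac{n-1}2,\ \frac{n+a+b+3}{2}\\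 \frac{a+3}{2}\end{smallmatrix};\frac{1-x^2}{1-c^2}\right), & n\text{ odd}.\end{cases}$$ Let $\rho_k(y)=y^k(1-\delta^2/y^2)^{k/2}$ for $k$ even and $\rho_k(y)=y^k(1-\delta^2/y^2)^{(k-1)/2}(1+\delta/y)$ for $k$ odd, and $$\mathcal{J}_{n,k}(x,y)=J_{n-k}\big(y;\alpha,2k+\beta+\gamma+1,(-1)^k\delta\big)\,\rho_k(y)\,J_k\Big(\frac{x}{y};\gamma,\beta,\frac{\delta}{y}\Big).$$ *)

From Stdlib Require Import Reals Lra Lia Arith.
Open Scope R_scope.

Fixpoint poch (a : R) (j : nat) : R :=
  match j with
  | O => 1
  | S j' => poch a j' * (a + INR j')
  end.

(* When a = -N (N a natural number) the series terminates and this is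
   exactly 2F1(a,b;c;z). *)
Definition hyp2F1_upto (N : nat) (a b c z : R) : R :=
  sum_f_R0 (fun j => poch a j * poch b j / (poch c j * INR (fact j)) * z ^ j) N.

Definition bigm1J (n : nat) (x a b c : R) : R :=
  let z := (1 - x ^ 2) / (1 - c ^ 2) in
  if Nat.even n then
    hyp2F1_upto (Nat.div2 n) (- INR n / 2) ((INR n + a + b + 2) / 2) ((a + 1) / 2) z
    + INR n * (1 - x) / ((1 + c) * (a + 1)) *
      hyp2F1_upto (Nat.div2 n - 1) (1 - INR n / 2) ((INR n + a + b + 2) / 2) ((a + 3) / 2) z
  else
    hyp2F1_upto (Nat.div2 n) (- (INR n - 1) / 2) ((INR n + a + b + 1) / 2) ((a + 1) / 2) z
    - (INR n + a + b + 1) * (1 - x) / ((1 + c) * (a + 1)) *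
      hyp2F1_upto (Nat.div2 n) (- (INR n - 1) / 2) ((INR n + a + b + 3) / 2) ((a + 3) / 2) z.

Definition rho (delta : R) (k : nat) (y : R) : R :=
  if Nat.even k then
    y ^ k * (1 - delta ^ 2 / y ^ 2) ^ (Nat.div2 k)
  else
    y ^ k * (1 - delta ^ 2 / y ^ 2) ^ (Nat.div2 k) * (1 + delta / y).

Definition Jcal (alpha beta gamma delta : R) (n k : nat) (x y : R) : R :=
  bigm1J (n - k) y alpha (2 * INR k + beta + gamma + 1) ((-1) ^ k * delta)
  * rho delta k y
  * bigm1J k (x / y) gamma beta (delta / y).

Definition nu (beta gamma : R) (k : nat) : R :=
  if Nat.even k then 2 * INR k else -2 * (INR k + beta + gamma + 1).

(* With u = x / y, c = delta / y and z = (1 - u^2) / (1 - c^2), the polynomial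
   J_k(u; gamma, beta, c) has the shape G(z) + (1 - u) / (1 + c) H(z), where G is a
   terminating 2F1(p, q; r) and H = -(p/r) 2F1(p + 1, q; r + 1) (for odd k with the two
   numerator parameters exchanged).  Comparing coefficients with the Pochhammer
   recurrences, such a pair solves the first-order system
     G' + z H' + q H = 0,     z (G' + H') + r H + p G = 0.
   Since R_x only flips the sign of u, which leaves z unchanged, the chain rule makes
   L_2 F + 4p F, for F = G(z) + (1 - u) / (1 + c) H(z), a linear combination of these
   two equations, hence zero.  The remaining factors of J_{n,k} depend on y only. *)

From Stdlib Require Import Reals Lra Lia Arith.
From Coquelicot Require Import Coquelicot.
Open Scope R_scope.

Lemma poch_succ_shift (a a' : R) (j : nat) : a' = a + 1 -> poch a (S j) = a * poch a' j.
Proof.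
  intros ->; induction j as [|j IH]; [simpl; ring|].
  change (poch a (S (S j))) with (poch a (S j) * (a + INR (S j))).
  rewrite IH, S_INR; simpl; ring.
Qed.

Lemma poch_pos (a : R) (j : nat) : 0 < a -> 0 < poch a j.
Proof.
  intros Ha; induction j as [|j IH]; simpl; [lra|].
  pose proof (pos_INR j); apply Rmult_lt_0_compat; lra.
Qed.

Lemma poch_eq0 (a : R) (i j : nat) : a + INR i = 0 -> (i < j)%nat -> poch a j = 0.
Proof.
  intros Hai; induction j as [|j IH]; intros Hij; [lia|]; simpl.
  destruct (Nat.eq_dec i j) as [<-|Hne]; [rewrite Hai | rewrite IH by lia]; ring.
Qed.

Definition psum (c : nat -> R) (N : nat) (z : R) : R := sum_f_R0 (fun j => c j * z ^ j) N.

Definition dcoef (c : nat -> R) (j : nat) : R := INR (S j) * c (S j).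

Lemma psum_ext (c c' : nat -> R) (N : nat) (z : R) :
  (forall j, c j = c' j) -> psum c N z = psum c' N z.
Proof. intros Hc; apply sum_eq; intros j _; rewrite Hc; reflexivity. Qed.

Lemma psum_scal (k : R) (c : nat -> R) (N : nat) (z : R) :
  k * psum c N z = psum (fun j => k * c j) N z.
Proof. unfold psum; rewrite scal_sum; apply sum_eq; intros; ring. Qed.

Lemma psum_plus (c c' : nat -> R) (N : nat) (z : R) :
  psum c N z + psum c' N z = psum (fun j => c j + c' j) N z.
Proof. unfold psum; rewrite <- plus_sum; apply sum_eq; intros; ring. Qed.

Lemma psum_eq0 (c : nat -> R) (N : nat) (z : R) : (forall j, c j = 0) -> psum c N z = 0.
Proof.
  intros Hc; unfold psum; induction N as [|N IH]; simpl; [|rewrite IH]; rewrite Hc; ring.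
Qed.

Lemma is_derive_psum_tail (c : nat -> R) (N : nat) (z : R) :
  is_derive (psum c N) z (psum (dcoef c) N z - dcoef c N * z ^ N).
Proof.
  induction N as [|N IH].
  - replace (psum (dcoef c) 0 z - dcoef c 0 * z ^ 0) with 0
      by (unfold psum, dcoef; simpl; ring).
    apply (is_derive_ext (fun _ => c 0%nat * 1)); [reflexivity|].
    exact (is_derive_const _ _).
  - apply (is_derive_ext (fun t => psum c N t + c (S N) * t ^ S N)); [reflexivity|].
    replace (psum (dcoef c) (S N) z - dcoef c (S N) * z ^ S N)
      with (psum (dcoef c) N z - dcoef c N * z ^ N + c (S N) * (INR (S N) * 1 * z ^ N))
      by (unfold psum, dcoef; simpl; ring).
    apply (is_derive_plus (psum c N) (fun t => c (S N) * t ^ S N)); [exact IH|].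
    apply is_derive_scal, is_derive_pow; exact (is_derive_id z).
Qed.

Lemma ex_derive_psum (c : nat -> R) (N : nat) (z : R) : ex_derive (psum c N) z.
Proof. eexists; apply is_derive_psum_tail. Qed.

Lemma Derive_psum (c : nat -> R) (N : nat) (z : R) :
  c (S N) = 0 -> Derive (psum c N) z = psum (dcoef c) N z.
Proof.
  intros Hc; rewrite (is_derive_unique _ _ _ (is_derive_psum_tail c N z)).
  unfold dcoef; rewrite Hc; ring.
Qed.

Lemma psum_mul_z_dcoef (c : nat -> R) (N : nat) (z : R) :
  c (S N) = 0 -> z * psum (dcoef c) N z = psum (fun j => INR j * c j) N z.
Proof.
  intros Hc.
  enough (Htail : forall M, z * psum (dcoef c) M z
                             = psum (fun j => INR j * c j) M z + dcoef c M * z ^ S M)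
    by (rewrite Htail; unfold dcoef; rewrite Hc; ring).
  unfold psum; intros M; induction M as [|M IH]; [unfold dcoef; simpl; ring|].
  rewrite !tech5, Rmult_plus_distr_l, IH; unfold dcoef; simpl; ring.
Qed.

Definition hyp_coef (p q r : R) (j : nat) : R :=
  poch p j * poch q j / (poch r j * INR (fact j)).

Definition hyp_companion (p q r : R) (j : nat) : R :=
  - (poch p (S j) * poch q j / (poch r (S j) * INR (fact j))).

Lemma hyp_coef_comm (p q r : R) (j : nat) : hyp_coef p q r j = hyp_coef q p r j.
Proof. unfold hyp_coef, Rdiv; ring. Qed.

Lemma hyp_coef_dcoef (p q r : R) (j : nat) : 0 < r ->
  dcoef (hyp_coef p q r) j + (INR j + q) * hyp_companion p q r j = 0.
Proof.
  intros Hr; unfold dcoef, hyp_coef, hyp_companion.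
  rewrite fact_simpl, mult_INR.
  change (poch q (S j)) with (poch q j * (q + INR j)).
  pose proof (poch_pos r (S j) Hr); pose proof (INR_fact_neq_0 j).
  pose proof (pos_INR j); rewrite S_INR in *.
  field; lra.
Qed.

Lemma hyp_coef_contiguous (p q r : R) (j : nat) : 0 < r ->
  INR j * (hyp_coef p q r j + hyp_companion p q r j) + r * hyp_companion p q r j
  + p * hyp_coef p q r j = 0.
Proof.
  intros Hr; unfold hyp_coef, hyp_companion.
  change (poch p (S j)) with (poch p j * (p + INR j)).
  change (poch r (S j)) with (poch r j * (r + INR j)).
  pose proof (poch_pos r j Hr); pose proof (INR_fact_neq_0 j); pose proof (pos_INR j).
  field; lra.
Qed.

Definition hyp_system (p q r : R) (G H : R -> R) : Prop :=
  (forall z, ex_derive G z) /\ (forall z, ex_derive H z) /\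
  (forall z, Derive G z + z * Derive H z + q * H z = 0) /\
  (forall z, z * (Derive G z + Derive H z) + r * H z + p * G z = 0).

Lemma hyp_system_terminating (p q r : R) (N : nat) :
  0 < r -> p + INR N = 0 \/ q + INR N = 0 ->
  hyp_system p q r (psum (hyp_coef p q r) N) (psum (hyp_companion p q r) N).
Proof.
  intros Hr Hend.
  assert (Hg : hyp_coef p q r (S N) = 0).
  { unfold hyp_coef; destruct Hend as [Hp|Hq];
      [rewrite (poch_eq0 p N) | rewrite (poch_eq0 q N)]; unfold Rdiv; auto; ring. }
  assert (Hh : hyp_companion p q r (S N) = 0).
  { unfold hyp_companion; destruct Hend as [Hp|Hq];
      [rewrite (poch_eq0 p N) | rewrite (poch_eq0 q N)]; unfold Rdiv; auto; ring. }
  split; [|split; [|split]]; intros z; try apply ex_derive_psum;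
    rewrite !Derive_psum by assumption.
  - rewrite psum_mul_z_dcoef, psum_scal, !psum_plus by assumption.
    apply psum_eq0; intros j; rewrite <- (hyp_coef_dcoef p q r j Hr); ring.
  - rewrite Rmult_plus_distr_l, !psum_mul_z_dcoef, !psum_scal, !psum_plus by assumption.
    apply psum_eq0; intros j; rewrite <- (hyp_coef_contiguous p q r j Hr); ring.
Qed.

Definition jacobi_shape (c : R) (G H : R -> R) (u : R) : R :=
  G ((1 - u ^ 2) / (1 - c ^ 2)) + (1 - u) / (1 + c) * H ((1 - u ^ 2) / (1 - c ^ 2)).

Lemma is_derive_jacobi_shape (c : R) (G H : R -> R) (u : R) :
  (forall z, ex_derive G z) -> (forall z, ex_derive H z) ->
  let z := (1 - u ^ 2) / (1 - c ^ 2) in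
  is_derive (jacobi_shape c G H) u
    (- 2 * u / (1 - c ^ 2) * (Derive G z + (1 - u) / (1 + c) * Derive H z) - H z / (1 + c)).
Proof.
  intros HG HH z; unfold jacobi_shape.
  auto_derive; [repeat split; auto|].
  replace (1 - c * (c * 1)) with (1 - c ^ 2) by ring.
  replace (1 + - (u * (u * 1))) with (1 - u ^ 2) by ring.
  change ((1 - u ^ 2) * / (1 - c ^ 2)) with z.
  change (fun x : R => G x) with G; change (fun x : R => H x) with H.
  unfold Rdiv; ring.
Qed.

Lemma jacobi_shape_L2_eigen (a b p C delta x y : R) (G H F : R -> R) :
  hyp_system p ((a + b + 2) / 2 - p) ((a + 1) / 2) G H ->
  x <> 0 -> y <> 0 -> y <> delta -> y <> - delta ->
  (forall t, F t = C * jacobi_shape (delta / y) G H (t / y)) ->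
  exists d, derivable_pt_lim F (- x) d /\
    2 * (y - x) * (x + delta) / x * d
    + ((a + b + 1) * x ^ 2 + (delta * a - b * y) * x + delta * y) / x ^ 2 * (F (- x) - F x)
    = - 4 * p * F x.
Proof.
  intros [HG [HH [E1 E2]]] Hx Hy Hyd Hyd' HF.
  set (c := delta / y); set (u := - x / y); set (z := (1 - u ^ 2) / (1 - c ^ 2)).
  assert (Hyc : y ^ 2 - delta ^ 2 <> 0).
  { replace (y ^ 2 - delta ^ 2) with ((y + delta) * (y - delta)) by ring.
    apply Rmult_integral_contrapositive; lra. }
  exists (C * (/ y * (- 2 * u / (1 - c ^ 2) * (Derive G z + (1 - u) / (1 + c) * Derive H z)
                      - H z / (1 + c)))).
  split.
  - apply is_derive_Reals.
    apply (is_derive_ext (fun t => C * jacobi_shape c G H (t / y))); [intros; now rewrite HF|].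
    apply (is_derive_scal (fun t => jacobi_shape c G H (t / y))).
    apply (is_derive_comp (jacobi_shape c G H) (fun t => t / y)).
    + exact (is_derive_jacobi_shape c G H u HG HH).
    + auto_derive; [trivial | field; exact Hy].
  - rewrite !HF; unfold jacobi_shape; fold c.
    replace ((1 - (x / y) ^ 2) / (1 - c ^ 2)) with z by (unfold z, u, Rdiv; ring).
    fold u z.
    specialize (E1 z); specialize (E2 z).
    apply Rminus_diag_uniq.
    transitivity (C * (4 * (z * (Derive G z + Derive H z) + (a + 1) / 2 * H z + p * G z)
                       + 4 * (x / y - 1) / (1 + c)
                         * (Derive G z + z * Derive H z + ((a + b + 2) / 2 - p) * H z))).
    + unfold z, u, c; field; repeat split; auto; lra.
    + rewrite E1, E2; ring.
Qed.

Lemma bigm1J_even (a b c u : R) (N : nat) :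
  -1 < a -> 1 + c <> 0 ->
  let p := - INR (2 * N) / 2 in
  let q := (INR (2 * N) + a + b + 2) / 2 in
  let r := (a + 1) / 2 in
  bigm1J (2 * N) u a b c
  = jacobi_shape c (psum (hyp_coef p q r) N) (psum (hyp_companion p q r) N) u.
Proof.
  intros Ha Hc p q r.
  assert (Hcomp : forall j, hyp_companion p q r j
                    = INR (2 * N) / (a + 1) * hyp_coef (1 - INR (2 * N) / 2) q ((a + 3) / 2) j).
  { intros j; unfold hyp_companion, hyp_coef.
    rewrite (poch_succ_shift p (1 - INR (2 * N) / 2)), (poch_succ_shift r ((a + 3) / 2))
      by (unfold p, r; field).
    pose proof (INR_fact_neq_0 j); pose proof (poch_pos ((a + 3) / 2) j).
    unfold p, r; field; lra. }
  assert (Htail : forall z, psum (hyp_companion p q r) N z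
                            = psum (hyp_companion p q r) (N - 1) z).
  { intros z; destruct N as [|N]; [reflexivity|].
    unfold psum; rewrite Nat.sub_succ, Nat.sub_0_r, tech5.
    unfold hyp_companion; rewrite (poch_eq0 p (S N)); [unfold Rdiv; ring| |lia].
    unfold p; rewrite mult_INR; simpl; lra. }
  unfold bigm1J, jacobi_shape; cbv zeta.
  rewrite Nat.even_even, Nat.div2_double, Htail, (psum_ext _ _ _ _ Hcomp), <- psum_scal.
  change (hyp2F1_upto ?M ?p' ?q' ?r') with (psum (hyp_coef p' q' r') M).
  fold p q r.
  field; lra.
Qed.

Lemma bigm1J_odd (a b c u : R) (N : nat) :
  -1 < a -> 1 + c <> 0 ->
  let p := - (INR (2 * N + 1) - 1) / 2 in
  let q := (INR (2 * N + 1) + a + b + 1) / 2 in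
  let r := (a + 1) / 2 in
  bigm1J (2 * N + 1) u a b c
  = jacobi_shape c (psum (hyp_coef q p r) N) (psum (hyp_companion q p r) N) u.
Proof.
  intros Ha Hc p q r.
  assert (Hcomp : forall j, hyp_companion q p r j
                    = - (INR (2 * N + 1) + a + b + 1) / (a + 1)
                      * hyp_coef p ((INR (2 * N + 1) + a + b + 3) / 2) ((a + 3) / 2) j).
  { intros j; unfold hyp_companion, hyp_coef.
    rewrite (poch_succ_shift q ((INR (2 * N + 1) + a + b + 3) / 2)),
      (poch_succ_shift r ((a + 3) / 2)) by (unfold q, r; field).
    pose proof (INR_fact_neq_0 j); pose proof (poch_pos ((a + 3) / 2) j).
    unfold q, r; field; lra. }
  unfold bigm1J, jacobi_shape; cbv zeta.
  rewrite Nat.even_odd, Nat.div2_odd', (psum_ext _ _ _ _ Hcomp), <- psum_scal.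
  rewrite (psum_ext (hyp_coef q p r) (hyp_coef p q r)) by (intros; apply hyp_coef_comm).
  change (hyp2F1_upto ?M ?p' ?q' ?r') with (psum (hyp_coef p' q' r') M).
  fold p q r.
  field; lra.
Qed.

Lemma bigm1J_hyp_system (a b : R) (n : nat) : -1 < a ->
  exists (p : R) (G H : R -> R),
    nu b a n = - 4 * p /\ hyp_system p ((a + b + 2) / 2 - p) ((a + 1) / 2) G H /\
    forall u c, 1 + c <> 0 -> bigm1J n u a b c = jacobi_shape c G H u.
Proof.
  intros Ha; assert (Hr : 0 < (a + 1) / 2) by lra.
  destruct (Nat.Even_or_Odd n) as [[N ->]|[N ->]].
  - set (p := - INR (2 * N) / 2); set (q := (INR (2 * N) + a + b + 2) / 2).
    exists p, (psum (hyp_coef p q ((a + 1) / 2)) N), (psum (hyp_companion p q ((a + 1) / 2)) N).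
    split; [|split].
    + unfold nu, p; rewrite Nat.even_even; field.
    + replace ((a + b + 2) / 2 - p) with q by (unfold p, q; field).
      apply hyp_system_terminating; [exact Hr|left].
      unfold p; rewrite mult_INR; simpl; field.
    + intros u c Hc; apply bigm1J_even; assumption.
  - set (p := (INR (2 * N + 1) + a + b + 1) / 2); set (q := - (INR (2 * N + 1) - 1) / 2).
    exists p, (psum (hyp_coef p q ((a + 1) / 2)) N), (psum (hyp_companion p q ((a + 1) / 2)) N).
    split; [|split].
    + unfold nu, p; rewrite Nat.even_odd; field.
    + replace ((a + b + 2) / 2 - p) with q by (unfold p, q; field).
      apply hyp_system_terminating; [exact Hr|right].
      unfold q; rewrite plus_INR, mult_INR; simpl; field.
    + intros u c Hc; apply bigm1J_odd; assumption.
Qed.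

Theorem proposition3p1 (alpha beta gamma delta : R) (n k : nat) :
  -1 < alpha -> -1 < beta -> -1 < gamma ->
  delta <> 1 -> delta <> -1 ->
  (k <= n)%nat ->
  forall x y : R, x <> 0 -> y <> 0 -> y <> delta -> y <> - delta ->
  exists d : R,
    derivable_pt_lim (fun t => Jcal alpha beta gamma delta n k t y) (- x) d /\
    2 * (y - x) * (x + delta) / x * d
    + ((gamma + beta + 1) * x ^ 2 + (delta * gamma - beta * y) * x + delta * y) / x ^ 2
      * (Jcal alpha beta gamma delta n k (- x) y - Jcal alpha beta gamma delta n k x y)
    = nu beta gamma k * Jcal alpha beta gamma delta n k x y.
Proof.
  intros _ _ Hgamma _ _ _ x y Hx Hy Hyd Hyd'.
  destruct (bigm1J_hyp_system gamma beta k Hgamma) as (p & G & H & Hnu & Hsys & Hshape).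
  rewrite Hnu.
  apply (jacobi_shape_L2_eigen gamma beta p
           (bigm1J (n - k) y alpha (2 * INR k + beta + gamma + 1) ((-1) ^ k * delta)
            * rho delta k y) delta x y G H); try assumption.
  intros t; unfold Jcal; rewrite Hshape; [reflexivity|].
  intros Hc; apply Hyd'.
  assert (Hdelta : delta = (1 + delta / y) * y - y) by (field; exact Hy).
  rewrite Hc in Hdelta; lra.
Qed.
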